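(* Let $K$ be a field of characteristic not equal to $2$ and let $S$ be a (unital, not necessarily associative) $K$-algebra with a pseudo-degree function $\chi$. If $a\in N(S)$ satisfies $\chi(a)=m>0$ and $C_S(a)$ satisfies condition $D(1)$, then $C_S(a)$ has a finite basis as a (left) $K[a]$-module, and the cardinality of this basis divides $m$.
   Context: All algebras are unital but not necessarily associative, and $K$ is embedded in $S$ via the unit. The nucleus $N(S)$ is the set of $x\in S$ with $x(yz)=(xy)z$, $(yx)z=y(xz)$ and $(yz)x=y(zx)$ for all $y,z\in S$. $C_S(a)$ denotes the set of elements of $S$ commuting with $a$, and $K[a]$ the subalgebra generated by $a$. A pseudo-degree function on $S$ is a map $\chi:S\to\mathbb{Z}\cup\{-\infty\}$ such that $\chi(x)=-\infty$ iff $x=0$; $\chi(xy)=\chi(x)+\chi(y)$; and $\chi(x+y)\le\max(\chi(x),\chi(y))$ for all $x,y\in S$. A subalgebra $B\subseteq S$ satisfies condition $D(1)$ if $\chi(x)\ge0$ for all nonzero $x\in B$, and whenever $b_1,b_2\in B$ satisfy $\chi(b_1)=\chi(b_2)$, there exist $\alpha_1,\alpha_2\in K$, not both zero, with $\chi(\alpha_1b_1+\alpha_2b_2)<\chi(b_1)$. *)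

From HB Require Import structures.
From mathcomp Require Import all_boot all_order all_algebra.
Set Implicit Arguments. Unset Strict Implicit. Unset Printing Implicit Defensive.
Import Order.TTheory GRing.Theory Num.Theory.
Local Open Scope ring_scope.

(* Values of a pseudo-degree function: Z \cup {-oo}, with None = -oo. *)
Definition dle (u v : option int) : bool :=
  match u, v with
  | None, _ => true
  | Some _, None => false
  | Some a, Some b => a <= b
  end.
Definition dlt (u v : option int) : bool := dle u v && (u != v).
Definition dmax (u v : option int) : option int := if dle u v then v else u.
Definition dadd (u v : option int) : option int :=
  match u, v with
  | Some a, Some b => Some (a + b)
  | _, _ => None
  end.

Section NAlg.
Variables (K : fieldType) (S : lmodType K) (mul : S -> S -> S) (one : S).

(* S with mul and one is a unital, not necessarily associative K-algebra
   (K embedded via k |-> k *: one). *)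
Definition is_unital_algebra : Prop :=
  [/\ forall k x y z, mul (k *: x + y) z = k *: mul x z + mul y z,
      forall k x y z, mul z (k *: x + y) = k *: mul z x + mul z y,
      forall x, mul one x = x &
      forall x, mul x one = x].

Definition is_pseudo_degree (chi : S -> option int) : Prop :=
  [/\ forall x, chi x = None <-> x = 0,
      forall x y, chi (mul x y) = dadd (chi x) (chi y) &
      forall x y, dle (chi (x + y)) (dmax (chi x) (chi y))].

Definition in_nucleus (x : S) : Prop :=
  [/\ forall y z, mul x (mul y z) = mul (mul x y) z,
      forall y z, mul (mul y x) z = mul y (mul x z) &
      forall y z, mul (mul y z) x = mul y (mul z x)].

Definition centralizer (a : S) (x : S) : Prop := mul x a = mul a x.

Definition is_subalgebra (P : S -> Prop) : Prop :=
  [/\ P one,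
      forall k x y, P x -> P y -> P (k *: x + y) &
      forall x y, P x -> P y -> P (mul x y)].

Definition gen_subalg (a : S) (x : S) : Prop :=
  forall P : S -> Prop, is_subalgebra P -> P a -> P x.

Definition condD1 (chi : S -> option int) (B : S -> Prop) : Prop :=
  (forall x, B x -> x != 0 -> dle (Some 0) (chi x)) /\
  (forall b1 b2, B b1 -> B b2 -> b1 != 0 -> b2 != 0 -> chi b1 = chi b2 ->
     exists al1 al2 : K, (al1 != 0 \/ al2 != 0) /\
       dlt (chi (al1 *: b1 + al2 *: b2)) (chi b1)).

Definition is_left_basis (R M : S -> Prop) (n : nat) (c : 'I_n -> S) : Prop :=
  [/\ forall i, M (c i),
      forall x, M x -> exists b : 'I_n -> S,
          (forall i, R (b i)) /\ x = \sum_(i < n) mul (b i) (c i) &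
      forall b : 'I_n -> S, (forall i, R (b i)) ->
          \sum_(i < n) mul (b i) (c i) = 0 -> forall i, b i = 0].

End NAlg.

From HB Require Import structures.
From mathcomp Require Import all_boot all_order all_algebra fingroup zify.
From mathcomp Require Import boolp.
Import Order.TTheory GRing.Theory Num.Theory.
Local Open Scope ring_scope.
Set Implicit Arguments. Unset Strict Implicit.

(** The degrees of the nonzero elements of the centralizer C of a form an
    additive monoid of naturals (D(1) makes them nonnegative), so their residues
    modulo m form a subgroup of Z/mZ, whose order divides m.  For each residue r
    in this subgroup pick c_r in C of least degree congruent to r.  The nonzero
    elements of K[a] are polynomials in a, of degrees in mN, so the products
    b_r c_r have pairwise distinct degrees and sum to 0 only if all vanish.  For
    x in C of degree km + deg c_r, condition D(1) applied to x and a^k c_r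
    yields a combination of lower degree, so x lies in the K[a]-span of the c_r
    by induction on the degree. *)

Section DegreeOrder.
Implicit Types u v w : option int.

Lemma dle_refl u : dle u u.
Proof. by case: u => //= a; lia. Qed.

Lemma dle_trans u v w : dle u v -> dle v w -> dle u w.
Proof. by case: u => [a|]; case: v => [b|]; case: w => [c|] //=; lia. Qed.

Lemma dle_total u v : dle u v || dle v u.
Proof. by case: u => [a|]; case: v => [b|] //=; lia. Qed.

Lemma dltNge u v : dlt u v = ~~ dle v u.
Proof.
by rewrite /dlt; case: u => [a|]; case: v => [b|] //=; rewrite (inj_eq Some_inj); lia.
Qed.

Lemma dmax_le u v w : dle (dmax u v) w = dle u w && dle v w.
Proof.
rewrite /dmax; case: u => [a|]; case: v => [b|]; case: w => [c|] //=; try lia.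
all: by case: ifP => //=; lia.
Qed.

Lemma dmaxC u v : dmax u v = dmax v u.
Proof.
rewrite /dmax; case: u => [a|]; case: v => [b|] //=.
by do 2 case: ifP => //= *; congr Some; lia.
Qed.

Lemma dmaxA : associative dmax.
Proof.
move=> u v w; rewrite /dmax; case: u => [a|]; case: v => [b|]; case: w => [c|] //=.
all: by repeat case: ifP => //=; move=> *; try congr Some; lia.
Qed.

Lemma dmax0l : left_id None dmax. Proof. by []. Qed.

HB.instance Definition _ := Monoid.isComLaw.Build (option int) None dmax dmaxA dmaxC dmax0l.

Lemma dmax_idl u v : dle v u -> dmax u v = u.
Proof. by rewrite dmaxC /dmax => ->. Qed.

Lemma dmax_ultra u v w : dlt v u -> dle w (dmax u v) -> dle u (dmax w v) -> w = u.
Proof.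
rewrite dltNge /dmax; case: u => [a|]; case: v => [b|]; case: w => [c|] //=.
all: by repeat case: ifP => //=; move=> *; try congr Some; lia.
Qed.

Lemma dlt_pred u v (D : nat) : dlt u v -> dlt v (Some D.+1%:Z) -> dlt u (Some D%:Z).
Proof. by rewrite !dltNge; case: u => [a|]; case: v => [b|] //=; lia. Qed.

Lemma dle_bigdmax (I : finType) (F : I -> option int) i :
  dle (F i) (\big[dmax/None]_j F j).
Proof.
rewrite (bigD1 i) //=; have := dle_refl (dmax (F i) (\big[dmax/None]_(j | j != i) F j)).
by rewrite dmax_le => /andP [].
Qed.

Lemma bigdmax_attained (I : finType) (F : I -> option int) :
  \big[dmax/None]_i F i = None \/ exists i, \big[dmax/None]_i F i = F i.
Proof.
apply: (big_ind (fun v => v = None \/ exists i, v = F i)); [by left | | by right; exists i].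
by move=> u v hu hv; rewrite /dmax; case: ifP.
Qed.

End DegreeOrder.

Lemma card_addmod_closed_dvdn M (H : {set 'I_M}) : (0 < M)%N ->
  (forall r : 'I_M, val r = 0%N -> r \in H) ->
  (forall r s t : 'I_M, r \in H -> s \in H -> val t = ((r + s) %% M)%N -> t \in H) ->
  (#|H| %| M)%N.
Proof.
case: M H => // M H _ H_has0 H_addmod.
have H_group : group_set H.
  apply/andP; split; first exact: H_has0.
  by apply/subsetP => _ /mulsgP [x y Hx Hy ->]; apply: H_addmod Hx Hy _.
by have := cardSg (subsetT (Group H_group)); rewrite cardsT card_ord.
Qed.

Section Algebra.
Variables (K : fieldType) (S : lmodType K) (mul : S -> S -> S) (one : S).
Hypothesis mulS : is_unital_algebra mul one.

Lemma amul_linl k x y z : mul (k *: x + y) z = k *: mul x z + mul y z.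
Proof. by case: mulS. Qed.

Lemma amul_linr k x y z : mul z (k *: x + y) = k *: mul z x + mul z y.
Proof. by case: mulS. Qed.

Lemma amul1l x : mul one x = x. Proof. by case: mulS. Qed.
Lemma amul1r x : mul x one = x. Proof. by case: mulS. Qed.

Lemma amul0l x : mul 0 x = 0.
Proof.
have := amul_linl 1 0 0 x; rewrite !scale1r !addr0 => h.
by apply: (addIr (mul 0 x)); rewrite -h add0r.
Qed.

Lemma amul0r x : mul x 0 = 0.
Proof.
have := amul_linr 1 0 0 x; rewrite !scale1r !addr0 => h.
by apply: (addIr (mul x 0)); rewrite -h add0r.
Qed.

Lemma amulZl k x z : mul (k *: x) z = k *: mul x z.
Proof. by have := amul_linl k x 0 z; rewrite addr0 amul0l addr0. Qed.

Lemma amulZr k x z : mul z (k *: x) = k *: mul z x.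
Proof. by have := amul_linr k x 0 z; rewrite addr0 amul0r addr0. Qed.

Lemma amulDr x y z : mul z (x + y) = mul z x + mul z y.
Proof. by have := amul_linr 1 x y z; rewrite !scale1r. Qed.

Lemma amul_sumr (I : Type) (r : seq I) (P : pred I) (F : I -> S) z :
  mul z (\sum_(i <- r | P i) F i) = \sum_(i <- r | P i) mul z (F i).
Proof. by elim/big_rec2: _ => [|i y1 y2 _ <-]; rewrite ?amul0r ?amulDr. Qed.

Variable chi : S -> option int.
Hypothesis chi_pd : is_pseudo_degree mul chi.

Lemma chi_eq0 x : chi x = None <-> x = 0. Proof. by case: chi_pd. Qed.
Lemma chi0 : chi 0 = None. Proof. exact/chi_eq0. Qed.
Lemma chiM x y : chi (mul x y) = dadd (chi x) (chi y). Proof. by case: chi_pd. Qed.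
Lemma chiD x y : dle (chi (x + y)) (dmax (chi x) (chi y)). Proof. by case: chi_pd. Qed.

Lemma chi_neq0 x : x != 0 -> exists z, chi x = Some z.
Proof. by case E: (chi x) => [z|]; [exists z | move/chi_eq0: E => ->; rewrite eqxx]. Qed.

Lemma amul_neq0 x y : x != 0 -> y != 0 -> mul x y != 0.
Proof.
move=> /chi_neq0 [u hu] /chi_neq0 [v hv]; apply/eqP => /chi_eq0.
by rewrite chiM hu hv.
Qed.

(* No positivity is needed here: [(-1) *: one] squares to [one]. *)
Lemma chiN x : chi (- x) = chi x.
Proof.
have [->|x_neq0] := eqVneq x 0; first by rewrite oppr0.
have one_neq0 : one != 0.
  by apply: contra x_neq0 => /eqP one0; rewrite -(amul1l x) one0 amul0l.
pose u : S := (-1) *: one.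
have chi1 : chi one = dadd (chi one) (chi one) by rewrite -chiM amul1l.
have chi_u2 : chi one = dadd (chi u) (chi u).
  by rewrite -chiM amulZl amulZr amul1l scalerA mulrNN mulr1 scale1r.
have -> : - x = mul u x by rewrite amulZl amul1l scaleN1r.
have [z hz] := chi_neq0 one_neq0; rewrite chiM.
move: chi1 chi_u2; rewrite hz; case: (chi u) => [w|] //= [] z0 [] w0.
by case: (chi x) => //= v; congr Some; lia.
Qed.

Lemma chi_add_neq x y : chi x != chi y -> chi (x + y) = dmax (chi x) (chi y).
Proof.
move=> ne_xy; wlog lt_yx : x y ne_xy / dlt (chi y) (chi x).
  case/orP: (dle_total (chi y) (chi x)) => le; first by apply=> //; rewrite /dlt le eq_sym.
  by rewrite addrC dmaxC; apply; rewrite 1?eq_sym // /dlt le.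
have le_yx : dle (chi y) (chi x) by move: lt_yx; rewrite /dlt => /andP [].
rewrite dmax_idl //; apply: (dmax_ultra lt_yx); first exact: chiD.
by have := chiD (x + y) (- y); rewrite addrK chiN.
Qed.

Lemma chi_sum_le (I : Type) (r : seq I) (P : pred I) (F : I -> S) B :
  (forall i, P i -> dle (chi (F i)) B) -> dle (chi (\sum_(i <- r | P i) F i)) B.
Proof.
move=> leFB; apply: (big_ind (fun x => dle (chi x) B)) => // [|x y hx hy].
  by rewrite chi0.
by apply: dle_trans (chiD x y) _; rewrite dmax_le hx hy.
Qed.

Section DistinctDegrees.
Variables (n : nat) (t : 'I_n -> S).
Hypothesis t_distinct : forall i j, t i != 0 -> chi (t i) = chi (t j) -> i = j.

Lemma chi_sum_distinct : chi (\sum_i t i) = \big[dmax/None]_i chi (t i).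
Proof.
elim: n t t_distinct => [|n' IH] u u_distinct; first by rewrite !big_ord0 chi0.
pose v i := u (widen_ord (leqnSn n') i).
have v_distinct : forall i j, v i != 0 -> chi (v i) = chi (v j) -> i = j.
  by move=> i j vi0 /(u_distinct _ _ vi0) /(congr1 val) /= /val_inj.
have chi_v := IH v v_distinct; rewrite /v in chi_v.
rewrite big_ord_recr [RHS]big_ord_recr /= -chi_v; set s := \sum_(i < n') _.
have [eq_last|ne] := eqVneq (chi s) (chi (u ord_max)); last exact: chi_add_neq.
have [u0|u_neq0] := eqVneq (u ord_max) 0.
  by rewrite u0 addr0 chi0 dmaxC.
have [z hz] := chi_neq0 u_neq0.
rewrite chi_v in eq_last.
case: (bigdmax_attained (fun i => chi (v i))) => [|[j hj]]; first by rewrite eq_last hz.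
have /(congr1 val) /= := u_distinct _ _ u_neq0 (etrans (esym eq_last) hj).
by move: (ltn_ord j) => /[swap] <-; rewrite ltnn.
Qed.

Lemma sum_distinct_eq0 : \sum_i t i = 0 -> forall i, t i = 0.
Proof.
move=> /(congr1 chi); rewrite chi0 chi_sum_distinct => sum0 i.
apply/chi_eq0; have := dle_bigdmax (fun j => chi (t j)) i.
by rewrite sum0; case: (chi (t i)).
Qed.

End DistinctDegrees.

Variable a : S.
Local Notation Ka := (gen_subalg mul one a).

Lemma gen_subalg_lin k x y : Ka x -> Ka y -> Ka (k *: x + y).
Proof.
move=> Kx Ky P P_subalg Pa; case: (P_subalg) => _ P_lin _.
by apply: P_lin; [apply: Kx | apply: Ky].
Qed.

Lemma gen_subalg_mul x y : Ka x -> Ka y -> Ka (mul x y).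
Proof.
move=> Kx Ky P P_subalg Pa; case: (P_subalg) => _ _ P_mul.
by apply: P_mul; [apply: Kx | apply: Ky].
Qed.

Lemma gen_subalg1 : Ka one. Proof. by move=> P []. Qed.

Lemma gen_subalg0 : Ka 0.
Proof. by have := gen_subalg_lin (-1) gen_subalg1 gen_subalg1; rewrite scaleN1r addNr. Qed.

Fixpoint apow k := if k is k'.+1 then mul a (apow k') else one.

Lemma gen_subalg_apow k : Ka (apow k).
Proof. by elim: k => [|k IH] /=; [exact: gen_subalg1 | apply: gen_subalg_mul]. Qed.

Definition aeval (p : {poly K}) : S := \sum_(k < size p) p`_k *: apow k.

Lemma aeval_widen N (p : {poly K}) :
  (size p <= N)%N -> aeval p = \sum_(k < N) p`_k *: apow k.
Proof.
move=> le_pN; rewrite /aeval (big_ord_widen N (fun k => p`_k *: apow k) le_pN).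
rewrite big_mkcond; apply: eq_bigr => i _; case: ifP => // /negbT.
by rewrite -leqNgt => /(nth_default 0) ->; rewrite scale0r.
Qed.

Lemma aeval0 : aeval 0 = 0.
Proof. by rewrite /aeval size_poly0 big_ord0. Qed.

Lemma aeval1 : aeval 1 = one.
Proof. by rewrite /aeval size_poly1 big_ord1 coef1 scale1r. Qed.

Lemma aeval_lin k (p q : {poly K}) : aeval (k *: p + q) = k *: aeval p + aeval q.
Proof.
set N := maxn (size p) (size q).
have le_pN : (size p <= N)%N by rewrite leq_maxl.
have le_qN : (size q <= N)%N by rewrite leq_maxr.
have le_kpqN : (size (k *: p + q)%R <= N)%N.
  rewrite (leq_trans (size_polyD _ _)) // geq_max le_qN andbT.
  exact: leq_trans (size_scale_leq _ _) le_pN.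
rewrite (aeval_widen le_pN) (aeval_widen le_qN) (aeval_widen le_kpqN).
rewrite scaler_sumr -big_split; apply: eq_bigr => i _.
by rewrite coefD coefZ scalerDl scalerA.
Qed.

Lemma aeval_mulX (p : {poly K}) : aeval (p * 'X) = mul a (aeval p).
Proof.
have [->|p_neq0] := eqVneq p 0; first by rewrite mul0r aeval0 amul0r.
rewrite /aeval size_mulX // big_ord_recl coefMX scale0r add0r amul_sumr.
by apply: eq_bigr => i _; rewrite coefMX amulZr.
Qed.

Hypothesis a_nucleus : in_nucleus mul a.

Lemma aeval_mul (p q : {poly K}) : aeval (p * q) = mul (aeval p) (aeval q).
Proof.
elim/poly_ind: p => [|p c IH]; first by rewrite mul0r aeval0 amul0l.
have -> : (p * 'X + c%:P) * q = c *: q + (p * q) * 'X.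
  by rewrite mulrDl mul_polyC mulrAC addrC.
have -> : p * 'X + c%:P = c *: 1 + p * 'X by rewrite -alg_polyC addrC.
rewrite !aeval_lin !aeval_mulX aeval1 IH amul_linl amul1l.
by case: a_nucleus => assoc_a _ _; rewrite assoc_a.
Qed.

Lemma gen_subalg_aeval x : Ka x -> exists p, x = aeval p.
Proof.
move=> /(_ (fun y => exists p, y = aeval p)); apply.
  split; first by exists 1; rewrite aeval1.
  - by move=> k _ _ [p ->] [q ->]; exists (k *: p + q); rewrite aeval_lin.
  - by move=> _ _ [p ->] [q ->]; exists (p * q); rewrite aeval_mul.
by exists 'X; rewrite -['X]mul1r aeval_mulX aeval1 amul1r.
Qed.

Let C := centralizer mul a.

Lemma centralizer_lin k x y : C x -> C y -> C (k *: x + y).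
Proof. by rewrite /C /centralizer => cx cy; rewrite amul_linl amul_linr cx cy. Qed.

Lemma centralizerZ k x : C x -> C (k *: x).
Proof. by rewrite /C /centralizer => cx; rewrite amulZl amulZr cx. Qed.

Lemma centralizer1 : C one.
Proof. by rewrite /C /centralizer amul1l amul1r. Qed.

Lemma centralizer_mul x y : C x -> C y -> C (mul x y).
Proof.
rewrite /C /centralizer => cx cy; case: a_nucleus => assoc_a assoc_mid assoc_r.
by rewrite assoc_r cy -assoc_mid cx assoc_a.
Qed.

Lemma centralizer_apow k : C (apow k).
Proof. by elim: k => [|k IH] /=; [exact: centralizer1 | exact: centralizer_mul]. Qed.

Variable m : nat.
Hypothesis chi_a : chi a = Some m%:Z.
Hypothesis m_gt0 : (0 < m)%N.
Hypothesis C_D1 : condD1 chi C.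

Lemma chiC_ge0 x : C x -> x != 0 -> dle (Some 0) (chi x).
Proof. by case: C_D1 => ge0 _; apply: ge0. Qed.

(* Junk value 0 off the nonzero elements of C, where chi is nonnegative. *)
Definition deg x : nat := if chi x is Some z then `|z|%N else 0%N.

Lemma chiC x : C x -> x != 0 -> chi x = Some (deg x)%:Z.
Proof.
move=> Cx x_neq0; have := chiC_ge0 Cx x_neq0; rewrite /deg.
by have [z ->] := chi_neq0 x_neq0; move=> /= z_ge0; congr Some; lia.
Qed.

Lemma one_neq0 : one != 0.
Proof.
by apply/eqP => one0; move: chi_a; rewrite -(amul1l a) one0 amul0l chi0.
Qed.

Lemma chi1 : chi one = Some 0.
Proof.
have := chiM one one; rewrite amul1l (chiC centralizer1 one_neq0) /= => -[deg1].
by congr Some; lia.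
Qed.

Lemma chi_scale1 k : k != 0 -> chi (k *: one) = Some 0.
Proof.
move=> k_neq0; have kone_neq0 l : l != 0 -> l *: one != 0.
  by move=> l_neq0; rewrite scaler_eq0 negb_or l_neq0 one_neq0.
have := chiM (k *: one) (k^-1 *: one).
rewrite amulZl amulZr amul1l scalerA mulfV // scale1r chi1.
rewrite !chiC ?kone_neq0 ?invr_eq0 //; try exact/centralizerZ/centralizer1.
by move=> /= -[degk]; congr Some; lia.
Qed.

Lemma chiZ k x : k != 0 -> chi (k *: x) = chi x.
Proof.
move=> k_neq0; rewrite -[x in k *: x]amul1l -amulZl chiM chi_scale1 //.
by case: (chi x) => //= z; rewrite add0r.
Qed.

Lemma chi_apow k : chi (apow k) = Some (k * m)%N%:Z.
Proof. by elim: k => [|k IH] /=; rewrite ?chi1 // chiM chi_a IH /=; congr Some; lia. Qed.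

Lemma chi_aeval (p : {poly K}) : p != 0 -> chi (aeval p) = Some ((size p).-1 * m)%N%:Z.
Proof.
move=> p_neq0; have : p`_(size p).-1 != 0 by rewrite -lead_coefE lead_coef_eq0.
have : size p = (size p).-1.+1 by rewrite prednK // size_poly_gt0.
rewrite /aeval; move: (size p).-1 => N -> lead_neq0; rewrite big_ord_recr /= addrC.
have lower : dle (chi (\sum_(i < N) p`_i *: apow i)) (Some ((N * m)%N%:Z - 1)).
  apply: chi_sum_le => i _; have [->|pi_neq0] := eqVneq p`_i 0.
    by rewrite scale0r chi0.
  by rewrite chiZ // chi_apow /=; have := ltn_ord i; nia.
rewrite chi_add_neq chiZ // chi_apow; last first.
  by apply: contraTneq lower => <- /=; lia.
by rewrite dmax_idl //; move: lower; case: (chi _) => //= z; lia.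
Qed.

Lemma gen_subalg_chi x : Ka x -> x != 0 -> exists k : nat, chi x = Some (k * m)%N%:Z.
Proof.
move=> /gen_subalg_aeval [p ->]; have [->|p_neq0] := eqVneq p 0.
  by rewrite aeval0 eqxx.
by exists (size p).-1; rewrite chi_aeval.
Qed.

Definition has_residue (r : nat) (x : S) : Prop := [/\ C x, x != 0 & (deg x %% m)%N = r].

Definition residues : {set 'I_m} := [set r : 'I_m | `[< exists x, has_residue r x >]].

Lemma deg_mul x y : C x -> C y -> x != 0 -> y != 0 -> deg (mul x y) = (deg x + deg y)%N.
Proof.
move=> Cx Cy x_neq0 y_neq0.
have := chiM x y; rewrite (chiC Cx x_neq0) (chiC Cy y_neq0).
rewrite (chiC (centralizer_mul Cx Cy) (amul_neq0 x_neq0 y_neq0)) /= => -[].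
by lia.
Qed.

Lemma card_residues_dvdn : (#|residues| %| m)%N.
Proof.
apply: card_addmod_closed_dvdn => // [r r0|r s t].
  rewrite inE; apply/asboolP; exists one; split; [exact: centralizer1 | exact: one_neq0 |].
  by rewrite /deg chi1 mod0n; exact: esym r0.
rewrite !inE => /asboolP [x [Cx x_neq0 xr]] /asboolP [y [Cy y_neq0 ys]] tE.
apply/asboolP; exists (mul x y); split; [exact: centralizer_mul | exact: amul_neq0 |].
by rewrite deg_mul // tE -xr -ys modnDm.
Qed.

Local Notation n := #|residues|.

Definition min_rep (r : nat) (x : S) : Prop :=
  has_residue r x /\ forall y, has_residue r y -> (deg x <= deg y)%N.

Lemma exists_min_rep r : (exists x, has_residue r x) -> exists x, min_rep r x.
Proof.
move=> [x0 hx0]; pose P d := `[< exists x, has_residue r x /\ deg x = d >].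
have exP : exists d, P d by exists (deg x0); apply/asboolP; exists x0.
case: (ex_minnP exP) => d /asboolP [x [hx <-]] min_d.
by exists x; split => // y hy; apply: min_d; apply/asboolP; exists y.
Qed.

Definition residue_of (i : 'I_n) : 'I_m := enum_val i.

Lemma exists_has_residue (i : 'I_n) : exists x, has_residue (residue_of i) x.
Proof. by have := enum_valP i; rewrite inE => /asboolP. Qed.

Definition cbasis (i : 'I_n) : S :=
  sval (cid (exists_min_rep (exists_has_residue i))).

Lemma cbasis_min_rep i : min_rep (residue_of i) (cbasis i).
Proof. exact: svalP (cid _). Qed.

Lemma cbasis_centralizer i : C (cbasis i). Proof. by have [[]] := cbasis_min_rep i. Qed.
Lemma cbasis_neq0 i : cbasis i != 0. Proof. by have [[]] := cbasis_min_rep i. Qed.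
Lemma deg_cbasis_mod i : (deg (cbasis i) %% m)%N = residue_of i.
Proof. by have [[]] := cbasis_min_rep i. Qed.

Definition spanned (x : S) : Prop :=
  exists b : 'I_n -> S, (forall i, Ka (b i)) /\ x = \sum_(i < n) mul (b i) (cbasis i).

Lemma spanned0 : spanned 0.
Proof.
exists (fun=> 0); split=> [_|]; first exact: gen_subalg0.
by rewrite big1 // => i _; rewrite amul0l.
Qed.

Lemma spanned_lin k x y : spanned x -> spanned y -> spanned (k *: x + y).
Proof.
move=> [b [Kb ->]] [b' [Kb' ->]]; exists (fun i => k *: b i + b' i); split.
  by move=> i; apply: gen_subalg_lin.
by rewrite scaler_sumr -big_split; apply: eq_bigr => i _; rewrite amul_linl.
Qed.

Lemma spanned_apow_cbasis k i : spanned (mul (apow k) (cbasis i)).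
Proof.
exists (fun j => if j == i then apow k else 0); split.
  by move=> j; case: eqP => _; [exact: gen_subalg_apow | exact: gen_subalg0].
rewrite (bigD1 i) //= eqxx big1 ?addr0 // => j /negbTE ->; exact: amul0l.
Qed.

Lemma degree_match x : C x -> x != 0 -> exists i k, chi (mul (apow k) (cbasis i)) = chi x.
Proof.
move=> Cx x_neq0; pose r : 'I_m := Ordinal (ltn_pmod (deg x) m_gt0).
have r_res : r \in residues by rewrite inE; apply/asboolP; exists x.
pose i := enum_rank_in r_res r; exists i.
have ri : residue_of i = r by rewrite /residue_of enum_rankK_in.
have [_ min_c] := cbasis_min_rep i; rewrite ri in min_c.
have le_cx : (deg (cbasis i) <= deg x)%N by apply: min_c.
have dvd_m : (m %| deg x - deg (cbasis i))%N by rewrite -eqn_mod_dvd // deg_cbasis_mod ri.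
exists ((deg x - deg (cbasis i)) %/ m)%N.
rewrite chiM chi_apow (chiC (cbasis_centralizer i) (cbasis_neq0 i)) (chiC Cx x_neq0) /=.
by congr Some; lia.
Qed.

Lemma degree_reduction x : C x -> x != 0 ->
  exists2 y, spanned y & C (x - y) /\ dlt (chi (x - y)) (chi x).
Proof.
move=> Cx x_neq0; have [i [k chi_y]] := degree_match Cx x_neq0.
set y := mul (apow k) (cbasis i) in chi_y.
have Cy : C y by apply: centralizer_mul (centralizer_apow k) (cbasis_centralizer i).
have y_neq0 : y != 0.
  by apply: contraNneq x_neq0 => y0; apply/eqP/chi_eq0; rewrite -chi_y y0 chi0.
have [_ D1] := C_D1.
have [al1 [al2 [al_neq0 chi_lt]]] := D1 x y Cx Cy x_neq0 y_neq0 (esym chi_y).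
have al1_neq0 : al1 != 0.
  apply: contraTneq chi_lt => al1_0; rewrite al1_0 scale0r add0r.
  have al2_neq0 : al2 != 0 by case: al_neq0 => //; rewrite al1_0 eqxx.
  by rewrite chiZ // chi_y /dlt eqxx andbF.
exists (- (al1^-1 * al2) *: y).
  by rewrite -[_ *: y]addr0; apply: spanned_lin spanned0; apply: spanned_apow_cbasis.
have -> : x - - (al1^-1 * al2) *: y = al1^-1 *: (al1 *: x + al2 *: y).
  by rewrite scaleNr opprK scalerDr !scalerA mulVf // scale1r.
split; last by rewrite chiZ ?invr_eq0.
by apply: centralizerZ; apply: centralizer_lin Cx (centralizerZ _ Cy).
Qed.

Lemma spanned_centralizer x : C x -> spanned x.
Proof.
suff spanned_below D y : C y -> dlt (chi y) (Some D%:Z) -> spanned y.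
  move=> Cx; have [->|x_neq0] := eqVneq x 0; first exact: spanned0.
  by apply: (spanned_below (deg x).+1) => //; rewrite chiC // dltNge /=; lia.
elim: D y => [|D IH] y Cy lt_yD; have [->|y_neq0] := eqVneq y 0; try exact: spanned0.
  by move: lt_yD; rewrite dltNge; have := chiC_ge0 Cy y_neq0; case: (chi y) => //= z; lia.
have [z span_z [Cyz lt_yz]] := degree_reduction Cy y_neq0.
rewrite -(subrK z y) -[y - z]scale1r; apply: spanned_lin span_z.
exact: IH Cyz (dlt_pred lt_yz lt_yD).
Qed.

Lemma chi_mul_cbasis b i : Ka b -> b != 0 ->
  exists k : nat, chi (mul b (cbasis i)) = Some (k * m + deg (cbasis i))%N%:Z.
Proof.
move=> Kb b_neq0; have [k chi_b] := gen_subalg_chi Kb b_neq0.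
exists k; rewrite chiM chi_b (chiC (cbasis_centralizer i) (cbasis_neq0 i)) /=.
by congr Some; lia.
Qed.

Lemma cbasis_free (b : 'I_n -> S) : (forall i, Ka (b i)) ->
  \sum_(i < n) mul (b i) (cbasis i) = 0 -> forall i, b i = 0.
Proof.
move=> Kb sum0 i.
have distinct j j' : mul (b j) (cbasis j) != 0 ->
    chi (mul (b j) (cbasis j)) = chi (mul (b j') (cbasis j')) -> j = j'.
  move=> t_neq0 chi_eq.
  have bj_neq0 : b j != 0 by apply: contraNneq t_neq0 => ->; rewrite amul0l.
  have bj'_neq0 : b j' != 0.
    apply: contraNneq t_neq0 => bj'0; apply/eqP/chi_eq0.
    by rewrite chi_eq bj'0 amul0l chi0.
  have [k chi_j] := chi_mul_cbasis j (Kb j) bj_neq0.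
  have [k' chi_j'] := chi_mul_cbasis j' (Kb j') bj'_neq0.
  move: chi_eq; rewrite chi_j chi_j' => -[] /(congr1 (modn^~ m)).
  rewrite !modnMDl !deg_cbasis_mod => /val_inj; exact: enum_val_inj.
have := sum_distinct_eq0 distinct sum0 i; apply: contraPeq => bi_neq0.
by apply/eqP; apply: amul_neq0 (cbasis_neq0 i).
Qed.

Lemma cbasis_is_left_basis : is_left_basis mul Ka C cbasis.
Proof.
split; [exact: cbasis_centralizer | exact: spanned_centralizer | exact: cbasis_free].
Qed.

Lemma centralizer_basis_dvdn :
  exists (k : nat) (c : 'I_k -> S), is_left_basis mul Ka C c /\ (k %| m)%N.
Proof.
by exists n, cbasis; split; [apply: cbasis_is_left_basis | apply: card_residues_dvdn].
Qed.

End Algebra.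

Theorem theorem2p10 (K : fieldType) (S : lmodType K) (mul : S -> S -> S)
  (one : S) (chi : S -> option int) (a : S) (m : nat) :
  2 \notin [pchar K] ->
  is_unital_algebra mul one ->
  is_pseudo_degree mul chi ->
  in_nucleus mul a ->
  chi a = Some (m%:Z) -> (0 < m)%N ->
  condD1 chi (centralizer mul a) ->
  exists (n : nat) (c : 'I_n -> S),
    is_left_basis mul (gen_subalg mul one a) (centralizer mul a) c /\ (n %| m)%N.
Proof.
move=> _ mulS chi_pd a_nucleus chi_a m_gt0 C_D1.
exact: (centralizer_basis_dvdn mulS chi_pd a_nucleus chi_a m_gt0 C_D1).
Qed.
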